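(* Let $B>0$, $C\in\mathbb{R}$ and $\mu\in\mathbb{R}$. On $\ell^2(\mathbb{N}_0)$ with standard orthonormal basis $(e_k)_{k\ge 0}$, let $H$ be the bounded self-adjoint Jacobi operator $$H e_0=\mu e_0+C e_1,\qquad H e_1=C e_0+B e_2,\qquad H e_k=B e_{k-1}+B e_{k+1}\ (k\ge 2),$$ i.e. the tridiagonal matrix with diagonal $(\mu,0,0,\dots)$ and off-diagonal $(C,B,B,\dots)$. Put $\mu_B=\mu/B$ and $C_B=C/B$, and assume the decay condition: if $C\neq B$, $$2\,|1-C_B^2|<\Big|\,|\mu_B|-\sqrt{\mu_B^2+4C_B^2-4}\,\Big|,$$ and if $C=B$, $|\mu_B|<1$. Fix a finite index $j\ge 0$ and let $\psi(t)=e^{-iHt}e_j$. Then $$\lim_{t\to+\infty}\langle n_j(t)\rangle=\lim_{t\to+\infty}|\langle e_j,\psi(t)\rangle|^2=0 .$$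
   Context: $n_j=e_je_j^\dagger$ denotes the projection onto $e_j$, and $\langle n_j(t)\rangle=\langle \psi(t),n_j\psi(t)\rangle$ is its expectation value in the time-evolved state $\psi(t)=e^{-iHt}e_j$ (units with $\hbar=1$). In the decay condition, when $\mu_B^2+4C_B^2-4<0$ the square root is the principal complex square root and the outer $|\cdot|$ is the complex modulus. *)

From Stdlib Require Import Reals.
From Coquelicot Require Import Coquelicot.
Open Scope R_scope.

(* Matrix entries H_{k m} of the Jacobi operator on l^2(N_0):
   diagonal (mu,0,0,...), off-diagonal (C,B,B,...). *)
Definition Hent (mu B Cc : R) (k m : nat) : R :=
  if Nat.eqb k m then (if Nat.eqb k 0 then mu else 0)
  else if orb (Nat.eqb (S k) m) (Nat.eqb k (S m)) then
         (if Nat.eqb (Nat.min k m) 0 then Cc else B)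
  else 0.

(* Matrix entries of H^n: (H^{n+1})_{kl} = sum_m H_{km} (H^n)_{ml};
   since H is tridiagonal only m = k-1, k, k+1 contribute. *)
Fixpoint Hpow (mu B Cc : R) (n : nat) (k l : nat) : R :=
  match n with
  | O => if Nat.eqb k l then 1 else 0
  | S n' =>
      (match k with O => 0 | S k' => Hent mu B Cc k k' * Hpow mu B Cc n' k' l end)
      + Hent mu B Cc k k * Hpow mu B Cc n' k l
      + Hent mu B Cc k (S k) * Hpow mu B Cc n' (S k) l
  end.

Definition expTerm (mu B Cc t : R) (k l n : nat) : C :=
  Cmult (Cdiv (Cpow (Cmult (Copp Ci) (RtoC t)) n) (RtoC (INR (Factorial.fact n))))
        (RtoC (Hpow mu B Cc n k l)).

(* <e_k, e^{-iHt} e_l> = sum_n (-iHt)^n/n! matrix entry (operator-norm convergent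
   exponential series), summed via its real and imaginary parts. *)
Definition amp (mu B Cc t : R) (k l : nat) : C :=
  (Series (fun n => Re (expTerm mu B Cc t k l n)),
   Series (fun n => Im (expTerm mu B Cc t k l n))).

Definition csqrtR (x : R) : C :=
  if Rle_dec 0 x then RtoC (sqrt x) else (0, sqrt (- x)).

Definition decay_condition (mu B Cc : R) : Prop :=
  let muB := mu / B in
  let CB := Cc / B in
  (Cc <> B -> 2 * Rabs (1 - CB ^ 2) <
             Cmod (Cminus (RtoC (Rabs muB)) (csqrtR (muB ^ 2 + 4 * CB ^ 2 - 4))))
  /\ (Cc = B -> Rabs muB < 1).

From Stdlib Require Import Reals Lra Lia Psatz Arith.Factorial.
From Coquelicot Require Import Coquelicot.
Open Scope R_scope.

(* Write [m = mu/B], [a = C_B^2 - 1] and [D(z) = 1 - m z - a z^2]; the decay condition says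
   exactly that [D] has no zero in the closed unit disk. The spectral measure of [e_j] is then
   explicit: if [phi] is the generalized eigenvector of [H], [H phi(x) = 2 B x phi(x)], then
   [<e_k, H^n e_l> = int_{-PI}^{PI} (2 B cos t)^n phi_k(cos t) phi_l(cos t) w(t) dt] with
   [w(t) = sin^2 t / (PI |D(e^{it})|^2)].
   Because [phi] is an eigenvector it suffices to prove this for [n = 0], i.e. orthonormality,
   and by symmetry only for the first row. That reduces to [int e^{int} / D(e^{it}) dt = 0] for
   [n >= 1]: these integrals are bounded and solve a linear recurrence with characteristic
   polynomial [D], so they vanish. Summing the exponential series turns the amplitude into
   [int e^{-2iBt cos s} dmu_j(s)]; the density of [mu_j] carries a factor [sin s], so one
   integration by parts bounds the amplitude by [O(1/t)]. *)

(** * Calculus on the real line *)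

(* Specializations to [R -> R] of Coquelicot's integral lemmas: the generic statements, over
   [plus]/[scal] in a normed-module carrier, neither unify with [+]/[*] when rewriting nor
   leave goals that [ring] recognizes as equalities in [R]. *)
Lemma RInt_ext_R (f g : R -> R) (lo hi : R) :
  (forall x, f x = g x) -> RInt f lo hi = RInt g lo hi.
Proof. intros E. apply RInt_ext. intros x _. apply E. Qed.

Lemma RInt_plus_R (f g : R -> R) (lo hi : R) : ex_RInt f lo hi -> ex_RInt g lo hi ->
  RInt (fun x => f x + g x) lo hi = RInt f lo hi + RInt g lo hi.
Proof. exact (RInt_plus f g lo hi). Qed.

Lemma RInt_minus_R (f g : R -> R) (lo hi : R) : ex_RInt f lo hi -> ex_RInt g lo hi ->
  RInt (fun x => f x - g x) lo hi = RInt f lo hi - RInt g lo hi.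
Proof. exact (RInt_minus f g lo hi). Qed.

Lemma RInt_scal_R (f : R -> R) (lo hi k : R) : ex_RInt f lo hi ->
  RInt (fun x => k * f x) lo hi = k * RInt f lo hi.
Proof. exact (RInt_scal f lo hi k). Qed.

Lemma RInt_lincomb3_R (f g h : R -> R) (lo hi c1 c2 : R) :
  ex_RInt f lo hi -> ex_RInt g lo hi -> ex_RInt h lo hi ->
  RInt (fun x => f x - c1 * g x - c2 * h x) lo hi
  = RInt f lo hi - c1 * RInt g lo hi - c2 * RInt h lo hi.
Proof.
  intros Hf Hg Hh. apply is_RInt_unique.
  apply (is_RInt_minus _ _ lo hi _ _
           (is_RInt_minus _ _ lo hi _ _ (RInt_correct f lo hi Hf)
              (is_RInt_scal _ lo hi c1 _ (RInt_correct g lo hi Hg)))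
           (is_RInt_scal _ lo hi c2 _ (RInt_correct h lo hi Hh))).
Qed.

Lemma continuous_plus_R (f g : R -> R) (x : R) :
  continuous f x -> continuous g x -> continuous (fun y => f y + g y) x.
Proof. apply (continuous_plus f g). Qed.

Lemma continuous_mult_R (f g : R -> R) (x : R) :
  continuous f x -> continuous g x -> continuous (fun y => f y * g y) x.
Proof. apply (continuous_mult f g). Qed.

Definition has_cont_derive (f f' : R -> R) : Prop :=
  forall x, is_derive f x (f' x) /\ continuous f' x.

Definition is_C1 (f : R -> R) : Prop := exists f', has_cont_derive f f'.

Lemma is_C1_continuous (f : R -> R) (x : R) : is_C1 f -> continuous f x.
Proof. intros [f' Hf]. apply (ex_derive_continuous f). exists (f' x). apply Hf. Qed.

Lemma ex_RInt_C1 (f : R -> R) (lo hi : R) : is_C1 f -> ex_RInt f lo hi.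
Proof.
  intros Hf. apply (@ex_RInt_continuous R_CompleteNormedModule).
  intros x _. apply is_C1_continuous, Hf.
Qed.

Lemma is_C1_ext (f g : R -> R) : (forall x, f x = g x) -> is_C1 f -> is_C1 g.
Proof.
  intros E [f' Hf]. exists f'. intros x. split.
  - apply (is_derive_ext f); [exact E | apply Hf].
  - apply Hf.
Qed.

Lemma is_C1_const (c : R) : is_C1 (fun _ => c).
Proof.
  exists (fun _ => 0). intros x. split.
  - apply (is_derive_const c).
  - apply continuous_const.
Qed.

Lemma is_C1_id : is_C1 (fun x => x).
Proof.
  exists (fun _ => 1). intros x. split.
  - apply (is_derive_id x).
  - apply continuous_const.
Qed.

Lemma is_C1_cos : is_C1 cos.
Proof.
  exists (fun x => - sin x). intros x. split.
  - apply is_derive_cos.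
  - apply (continuous_opp sin), continuous_sin.
Qed.

Lemma is_C1_sin : is_C1 sin.
Proof.
  exists cos. intros x. split.
  - apply is_derive_sin.
  - apply continuous_cos.
Qed.

Lemma is_C1_plus (f g : R -> R) : is_C1 f -> is_C1 g -> is_C1 (fun x => f x + g x).
Proof.
  intros [f' Hf] [g' Hg]. exists (fun x => f' x + g' x). intros x.
  destruct (Hf x), (Hg x). split.
  - apply (is_derive_plus f g); assumption.
  - apply continuous_plus_R; assumption.
Qed.

Lemma is_C1_mult (f g : R -> R) : is_C1 f -> is_C1 g -> is_C1 (fun x => f x * g x).
Proof.
  intros Cf Cg. pose proof Cf as [f' Hf]. pose proof Cg as [g' Hg].
  exists (fun x => f' x * g x + f x * g' x). intros x.
  destruct (Hf x), (Hg x). split.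
  - apply (is_derive_mult f g); [assumption | assumption | intros; apply Rmult_comm].
  - apply continuous_plus_R; apply continuous_mult_R; auto using is_C1_continuous.
Qed.

Lemma is_C1_comp (f g : R -> R) : is_C1 f -> is_C1 g -> is_C1 (fun x => g (f x)).
Proof.
  intros Cf [g' Hg]. pose proof Cf as [f' Hf].
  exists (fun x => f' x * g' (f x)). intros x.
  destruct (Hf x), (Hg (f x)). split.
  - apply (is_derive_comp g f); assumption.
  - apply continuous_mult_R; [assumption|].
    apply (continuous_comp f g'); [apply is_C1_continuous, Cf | apply Hg].
Qed.

Lemma is_C1_pow (f : R -> R) (n : nat) : is_C1 f -> is_C1 (fun x => f x ^ n).
Proof.
  intros Cf. induction n as [|n IH]; [exact (is_C1_const 1)|].
  apply is_C1_mult; assumption.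
Qed.

Lemma is_C1_inv (f : R -> R) : is_C1 f -> (forall x, f x <> 0) -> is_C1 (fun x => / f x).
Proof.
  intros Cf Hnz. pose proof Cf as [f' Hf].
  exists (fun x => - f' x / f x ^ 2). intros x. destruct (Hf x). split.
  - apply (is_derive_inv f); auto.
  - apply continuous_mult_R.
    + apply (continuous_opp f'); assumption.
    + apply (continuous_Rinv_comp (fun x => f x ^ 2)); [|apply pow_nonzero, Hnz].
      apply is_C1_continuous, is_C1_pow, Cf.
Qed.

Lemma is_C1_scal (k : R) (f : R -> R) : is_C1 f -> is_C1 (fun x => k * f x).
Proof. apply is_C1_mult, is_C1_const. Qed.

Lemma is_C1_minus (f g : R -> R) : is_C1 f -> is_C1 g -> is_C1 (fun x => f x - g x).
Proof.
  intros Cf Cg. apply (is_C1_ext (fun x => f x + -1 * g x)); [intros; ring|].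
  apply is_C1_plus, is_C1_scal; assumption.
Qed.

Lemma is_C1_div (f g : R -> R) : is_C1 f -> is_C1 g -> (forall x, g x <> 0) ->
  is_C1 (fun x => f x / g x).
Proof. intros Cf Cg Hg. apply is_C1_mult, is_C1_inv; assumption. Qed.

Lemma abs_RInt_mult_le (f w : R -> R) (lo hi eps : R) : lo <= hi ->
  (forall x, continuous f x) -> (forall x, continuous w x) -> (forall x, Rabs (f x) <= eps) ->
  Rabs (RInt (fun x => f x * w x) lo hi) <= eps * RInt (fun x => Rabs (w x)) lo hi.
Proof.
  intros Hlh Hf Hw Hb.
  assert (Hex : forall g : R -> R, (forall x, continuous g x) -> ex_RInt g lo hi)
    by (intros g Hg; apply (@ex_RInt_continuous R_CompleteNormedModule); auto).
  eapply Rle_trans;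
    [apply abs_RInt_le; [exact Hlh | apply Hex; intros; apply continuous_mult_R; auto]|].
  rewrite <- RInt_scal_R by (apply Hex; intros; apply continuous_Rabs_comp; auto).
  apply RInt_le; [exact Hlh| | |].
  - apply Hex. intros x. apply continuous_Rabs_comp, continuous_mult_R; auto.
  - apply Hex. intros x. apply continuous_mult_R; [apply continuous_const|].
    apply continuous_Rabs_comp; auto.
  - intros x _. rewrite Rabs_mult. apply Rmult_le_compat_r; [apply Rabs_pos | apply Hb].
Qed.

(** * The polynomial [1 - m z - a z^2] *)

Lemma Cmod_unit_circle (x : R) : Cmod (cos x, sin x) = 1.
Proof.
  unfold Cmod. simpl. pose proof (sin2_cos2 x). unfold Rsqr in *.
  replace (cos x * (cos x * 1) + sin x * (sin x * 1)) with 1 by lra. apply sqrt_1.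
Qed.

Lemma Cmod_reverse_triangle (x z : C) : Cmod x - Cmod z <= Cmod (x - z).
Proof.
  pose proof (Cmod_triangle (x - z) z) as H.
  replace (x - z + z)%C with x in H by ring. lra.
Qed.

Lemma Cminus_eq_0 (u v : C) : (u - v)%C = 0%C -> u = v.
Proof. intros H. transitivity (u - v + v)%C; [ring|]. rewrite H. ring. Qed.

Lemma bounded_geometric_vanishes (q : C) (J : nat -> C) (K : R) (n0 : nat) :
  1 < Cmod q -> (forall n, Cmod (J n) <= K) ->
  (forall n, (n0 <= n)%nat -> J (S n) = (q * J n)%C) ->
  forall n, (n0 <= n)%nat -> J n = 0%C.
Proof.
  intros Hq HK Hrec n Hn.
  assert (Hgeom : forall k, J (n + k)%nat = (q ^ k * J n)%C).
  { induction k as [|k IH]; [rewrite Nat.add_0_r; simpl; ring|].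
    rewrite Nat.add_succ_r, Hrec, IH by lia. simpl. ring. }
  destruct (Ceq_dec (J n) 0) as [E|E]; [exact E|exfalso].
  apply Cmod_gt_0 in E.
  pose proof (is_lim_seq_geom_p (Cmod q) Hq) as Hlim.
  apply is_lim_seq_spec in Hlim. destruct (Hlim (K / Cmod (J n))) as [k Hk].
  specialize (Hk k (le_n k)). specialize (HK (n + k)%nat).
  rewrite Hgeom, Cmod_mult, Cmod_pow in HK.
  apply (Rmult_lt_compat_r (Cmod (J n))) in Hk; [|exact E].
  unfold Rdiv in Hk. rewrite Rmult_assoc, Rinv_l, Rmult_1_r in Hk by lra. lra.
Qed.

(* The zeros of [1 - m z - a z^2] lie outside the closed unit disk; when [a <> 0] they are
   given through Vieta's formulas. *)
Definition roots_outside_disk (m a : R) : Prop :=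
  (a = 0 /\ Rabs m < 1) \/
  (a <> 0 /\ exists x1 x2 : C, (x1 + x2)%C = RtoC (- m / a) /\
      (x1 * x2)%C = RtoC (- 1 / a) /\ 1 < Cmod x1 /\ 1 < Cmod x2).

Lemma bounded_recurrence_solution_vanishes (m a : R) (J : nat -> C) (K : R) :
  roots_outside_disk m a -> (forall n, Cmod (J n) <= K) ->
  (forall n, (1 <= n)%nat -> (J n - RtoC m * J (S n) - RtoC a * J (S (S n)) = 0)%C) ->
  forall n, (1 <= n)%nat -> J n = 0%C.
Proof.
  intros [[Ha Hm] | [Ha (x1 & x2 & Hs & Hp & H1 & H2)]] HK Hrec; subst.
  - destruct (Req_dec m 0) as [Hm0|Hm0].
    + intros n Hn. specialize (Hrec n Hn). subst m.
      rewrite <- Hrec. ring.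
    + apply (bounded_geometric_vanishes (RtoC (/ m)) J K 1); [|exact HK|].
      * pose proof (Rabs_pos_lt m Hm0).
        pose proof (Rinv_lt_contravar (Rabs m) 1 ltac:(lra) Hm) as Hinv.
        rewrite Rinv_1 in Hinv. rewrite Cmod_R, Rabs_inv. exact Hinv.
      * intros n Hn. specialize (Hrec n Hn).
        replace (J n) with (RtoC m * J (S n))%C
          by (symmetry; apply Cminus_eq_0; rewrite <- Hrec; ring).
        rewrite Cmult_assoc, <- RtoC_mult, Rinv_l by exact Hm0. ring.
  - assert (Ha' : RtoC a <> 0%C) by (intros E; apply Ha; injection E; auto).
    assert (Hfac : forall n, (1 <= n)%nat ->
      J (S (S n)) = ((x1 + x2) * J (S n) - x1 * x2 * J n)%C).
    { intros n Hn. rewrite Hs, Hp. specialize (Hrec n Hn).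
      unfold Rdiv. rewrite !RtoC_mult, RtoC_opp, RtoC_inv by exact Ha.
      replace (J (S (S n))) with ((J n - RtoC m * J (S n)) / RtoC a)%C; [field; exact Ha'|].
      apply Cminus_eq_0.
      transitivity ((J n - RtoC m * J (S n) - RtoC a * J (S (S n))) / RtoC a)%C;
        [field; exact Ha'|].
      rewrite Hrec. unfold Cdiv. ring. }
    assert (Hu : forall n, (1 <= n)%nat -> (J (S n) - x1 * J n)%C = 0%C).
    { apply (bounded_geometric_vanishes x2 (fun n => J (S n) - x1 * J n)%C (K + Cmod x1 * K) 1).
      - exact H2.
      - intros n. eapply Rle_trans; [apply Cmod_triangle|].
        rewrite Cmod_opp, Cmod_mult.
        pose proof (HK (S n)). pose proof (HK n). pose proof (Cmod_ge_0 x1). nra.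
      - intros n Hn. rewrite Hfac by exact Hn. ring. }
    apply (bounded_geometric_vanishes x1 J K 1); [exact H1|exact HK|].
    intros n Hn. apply Cminus_eq_0, Hu, Hn.
Qed.

Lemma csqrtR_mul_self (d : R) : (csqrtR d * csqrtR d)%C = RtoC d.
Proof.
  unfold csqrtR. destruct (Rle_dec 0 d) as [Hd|Hd];
    apply injective_projections; simpl; try ring.
  - rewrite Rmult_0_r, Rminus_0_r. apply sqrt_sqrt, Hd.
  - rewrite Rmult_0_r, Rminus_0_l, sqrt_sqrt by lra. ring.
Qed.

Lemma csqrtR_Re_nonneg (d : R) : 0 <= Re (csqrtR d).
Proof. unfold csqrtR. destruct (Rle_dec 0 d); simpl; [apply sqrt_pos | lra]. Qed.

Lemma Cmod_minus_le_plus (A : R) (s : C) : 0 <= A -> 0 <= Re s ->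
  Cmod (RtoC A - s) <= Cmod (RtoC A + s).
Proof.
  intros HA Hs.
  assert (Hsq : Cmod (RtoC A - s) ^ 2 <= Cmod (RtoC A + s) ^ 2).
  { rewrite !Cmod2_alt. destruct s as [sr si]. unfold Re in *. simpl in *. nra. }
  pose proof (Cmod_ge_0 (RtoC A - s)). pose proof (Cmod_ge_0 (RtoC A + s)). nra.
Qed.

Lemma exists_sign (m : R) : exists sg, sg * sg = 1 /\ Rabs sg = 1 /\ sg * m = Rabs m.
Proof.
  destruct (Rle_dec 0 m).
  - exists 1. rewrite Rabs_R1, Rabs_pos_eq by lra. repeat split; ring.
  - exists (-1). rewrite Rabs_left, (Rabs_left m) by lra. repeat split; ring.
Qed.

Lemma one_lt_Cmod_div (z : C) (a : R) : a <> 0 -> 2 * Rabs a < Cmod z ->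
  1 < Cmod (z / RtoC (2 * a)).
Proof.
  intros Ha Hz. pose proof (Rabs_pos_lt a Ha).
  rewrite Cmod_div, Cmod_R, Rabs_mult, (Rabs_pos_eq 2) by (lra || (intros E; injection E; lra)).
  apply Rmult_lt_reg_r with (2 * Rabs a); [lra|].
  unfold Rdiv. rewrite Rmult_assoc, Rinv_l, Rmult_1_r by lra. lra.
Qed.

Lemma roots_outside_disk_of_sqrt (m a : R) (s : C) : a <> 0 ->
  (s * s)%C = RtoC (m ^ 2 + 4 * a) -> 0 <= Re s ->
  2 * Rabs a < Cmod (RtoC (Rabs m) - s) -> roots_outside_disk m a.
Proof.
  intros Ha Hss Hs Hgap. right. split; [exact Ha|].
  destruct (exists_sign m) as (sg & Hsg2 & Hsg1 & Hsgm).
  assert (Ha' : RtoC a <> 0%C) by (intros E; injection E; lra).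
  assert (H2 : RtoC 2 <> 0%C) by (intros E; injection E; lra).
  assert (Hmod : forall z : C, Cmod (RtoC sg * z) = Cmod z)
    by (intros z; rewrite Cmod_mult, Cmod_R, Hsg1; ring).
  assert (Hm : RtoC (- m) = (- (RtoC sg * RtoC (Rabs m)))%C).
  { rewrite <- RtoC_mult, <- Hsgm, <- Rmult_assoc, Hsg2, Rmult_1_l, RtoC_opp. reflexivity. }
  exists ((RtoC (- m) + RtoC sg * s) / RtoC (2 * a))%C.
  exists ((RtoC (- m) - RtoC sg * s) / RtoC (2 * a))%C.
  repeat split.
  - rewrite RtoC_div by exact Ha. rewrite RtoC_mult, RtoC_opp. field. auto.
  - transitivity ((RtoC (m ^ 2) - RtoC (sg * sg) * (s * s)) / (RtoC (2 * a) * RtoC (2 * a)))%C.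
    + rewrite !RtoC_mult, RtoC_opp, RtoC_pow. field. auto.
    + rewrite Hsg2, Hss, <- !RtoC_mult, <- RtoC_minus, <- RtoC_div
        by (apply Rmult_integral_contrapositive; lra).
      f_equal. field. exact Ha.
  - apply one_lt_Cmod_div; [exact Ha|].
    replace (RtoC (- m) + RtoC sg * s)%C with (RtoC sg * - (RtoC (Rabs m) - s))%C
      by (rewrite Hm; ring).
    rewrite Hmod, Cmod_opp. exact Hgap.
  - apply one_lt_Cmod_div; [exact Ha|].
    replace (RtoC (- m) - RtoC sg * s)%C with (RtoC sg * - (RtoC (Rabs m) + s))%C
      by (rewrite Hm; ring).
    rewrite Hmod, Cmod_opp. eapply Rlt_le_trans; [exact Hgap|].
    apply Cmod_minus_le_plus; [apply Rabs_pos | exact Hs].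
Qed.

Lemma decay_condition_roots_outside_disk (B Cc mu : R) : 0 < B ->
  decay_condition mu B Cc -> roots_outside_disk (mu / B) ((Cc / B) ^ 2 - 1).
Proof.
  intros HB [Hne Heq]. destruct (Req_dec Cc B) as [E|E].
  - left. split; [subst; field; lra | exact (Heq E)].
  - specialize (Hne E). set (m := mu / B) in *. set (cb := Cc / B) in *.
    assert (Ha : cb ^ 2 - 1 <> 0).
    { intros Ha. replace (m ^ 2 + 4 * cb ^ 2 - 4) with (Rabs m ^ 2) in Hne
        by (rewrite pow2_abs; lra).
      unfold csqrtR in Hne.
      destruct (Rle_dec 0 (Rabs m ^ 2)) as [_|N]; [|pose proof (pow2_ge_0 (Rabs m)); lra].
      rewrite sqrt_pow2 in Hne by apply Rabs_pos.
      replace (Cminus (RtoC (Rabs m)) (RtoC (Rabs m))) with (RtoC 0) in Hne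
        by (apply injective_projections; simpl; ring).
      rewrite Cmod_0 in Hne. pose proof (Rabs_pos (1 - cb ^ 2)). lra. }
    apply (roots_outside_disk_of_sqrt m _ (csqrtR (m ^ 2 + 4 * cb ^ 2 - 4)) Ha).
    + rewrite csqrtR_mul_self. f_equal. ring.
    + apply csqrtR_Re_nonneg.
    + replace (Rabs (cb ^ 2 - 1)) with (Rabs (1 - cb ^ 2))
        by (rewrite <- Rabs_Ropp; f_equal; ring).
      exact Hne.
Qed.

Lemma RInt_cos_nat (n : nat) :
  RInt (fun x => cos (INR n * x)) (- PI) PI = if Nat.eqb n 0 then 2 * PI else 0.
Proof.
  destruct n as [|n]; simpl Nat.eqb.
  - rewrite (RInt_ext_R _ (fun _ => 1)) by (intros x; rewrite Rmult_0_l; apply cos_0).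
    rewrite RInt_const. unfold scal; simpl; unfold mult; simpl. ring.
  - set (N := INR (S n)). assert (HN : N <> 0) by (apply not_0_INR; lia).
    assert (HsinN : sin (N * PI) = 0).
    { apply sin_eq_0_1. exists (Z.of_nat (S n)). rewrite <- INR_IZR_INZ. reflexivity. }
    apply is_RInt_unique.
    replace 0 with (minus (sin (N * PI) / N) (sin (N * - PI) / N)).
    2:{ replace (N * - PI) with (- (N * PI)) by ring.
        rewrite sin_neg, HsinN. unfold minus, plus, opp; simpl. field. exact HN. }
    apply (is_RInt_derive (fun x => sin (N * x) / N)).
    + intros x _. auto_derive; [exact I|]. field. exact HN.
    + intros x _. apply (ex_derive_continuous (fun x => cos (N * x))). auto_derive. exact I.
Qed.

Section CharacteristicPolynomial.

Variables m a : R.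

Definition D_re (x : R) : R := 1 - m * cos x - a * cos (2 * x).
Definition D_im (x : R) : R := - (m * sin x + a * sin (2 * x)).
Definition D_norm2 (x : R) : R := D_re x ^ 2 + D_im x ^ 2.

Lemma D_norm2_Cmod (x : R) :
  D_norm2 x = Cmod (1 - RtoC m * (cos x, sin x) - RtoC a * (cos x, sin x) * (cos x, sin x))%C ^ 2.
Proof. rewrite Cmod2_alt. unfold D_norm2, D_re, D_im. rewrite cos_2a, sin_2a. simpl. ring. Qed.

Hypothesis Hroots : roots_outside_disk m a.

Lemma D_norm2_lower_bound : exists d, 0 < d /\ forall x, d <= D_norm2 x.
Proof.
  destruct Hroots as [[Ha Hm] | [Ha (x1 & x2 & Hs & Hp & H1 & H2)]].
  - exists ((1 - Rabs m) ^ 2). split; [apply pow_lt; lra|].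
    intros x. rewrite D_norm2_Cmod, Ha. apply pow_incr. split; [lra|].
    pose proof (Cmod_reverse_triangle 1 (RtoC m * (cos x, sin x))) as H.
    rewrite Cmod_mult, Cmod_unit_circle, Rmult_1_r, !Cmod_R, Rabs_R1 in H.
    replace (1 - RtoC m * (cos x, sin x) - RtoC 0 * (cos x, sin x) * (cos x, sin x))%C
      with (1 - RtoC m * (cos x, sin x))%C by ring.
    lra.
  - assert (Ha' : RtoC a <> 0%C) by (intros E; apply Ha; injection E; auto).
    set (d := Rabs a * (Cmod x1 - 1) * (Cmod x2 - 1)).
    assert (Hd : 0 < d) by (unfold d; pose proof (Rabs_pos_lt a Ha); apply Rmult_lt_0_compat; nra).
    exists (d ^ 2). split; [apply pow_lt; lra|].
    intros x. rewrite D_norm2_Cmod. set (z := (cos x, sin x)).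
    replace (1 - RtoC m * z - RtoC a * z * z)%C with (- RtoC a * ((x1 - z) * (x2 - z)))%C.
    2:{ replace ((x1 - z) * (x2 - z))%C with (z * z - (x1 + x2) * z + x1 * x2)%C by ring.
        rewrite Hs, Hp. unfold Rdiv. rewrite !RtoC_mult, !RtoC_opp, RtoC_inv by exact Ha.
        field. exact Ha'. }
    apply pow_incr. split; [lra|].
    rewrite !Cmod_mult, Cmod_opp, Cmod_R. unfold d. rewrite Rmult_assoc.
    pose proof (Cmod_reverse_triangle x1 z). pose proof (Cmod_reverse_triangle x2 z).
    unfold z in *. rewrite Cmod_unit_circle in *.
    apply Rmult_le_compat_l; [apply Rabs_pos|]. apply Rmult_le_compat; lra.
Qed.

Lemma D_norm2_pos (x : R) : 0 < D_norm2 x.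
Proof. destruct D_norm2_lower_bound as (d & Hd & H). specialize (H x). lra. Qed.

(* The real part of [e^{inx} / D(e^{ix})], where [D(z) = 1 - m z - a z^2]. *)
Definition mode_D (n : nat) (x : R) : R :=
  (cos (INR n * x) * D_re x + sin (INR n * x) * D_im x) / D_norm2 x.

Lemma mode_D_recurrence (n : nat) (x : R) :
  mode_D n x - m * mode_D (S n) x - a * mode_D (S (S n)) x = cos (INR n * x).
Proof.
  pose proof (D_norm2_pos x). unfold mode_D in *.
  replace (INR (S (S n)) * x) with (INR n * x + 2 * x) by (rewrite !S_INR; ring).
  replace (INR (S n) * x) with (INR n * x + x) by (rewrite !S_INR; ring).
  rewrite !cos_plus, !sin_plus. unfold D_norm2, D_re, D_im in *. field. lra.
Qed.

Lemma continuous_mode_D (n : nat) (x : R) : continuous (mode_D n) x.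
Proof.
  apply (ex_derive_continuous (mode_D n)). pose proof (D_norm2_pos x).
  unfold mode_D, D_norm2, D_re, D_im in *. auto_derive. lra.
Qed.

Lemma mode_D_bound : exists L, forall n x, Rabs (mode_D n x) <= L.
Proof.
  destruct D_norm2_lower_bound as (d & Hd & Hlow).
  exists ((1 + 2 * Rabs m + 2 * Rabs a) / d). intros n x.
  assert (Htrig : forall y, Rabs (cos y) <= 1 /\ Rabs (sin y) <= 1)
    by (intros y; split; apply Rabs_le; auto using COS_bound, SIN_bound).
  destruct (Htrig x), (Htrig (2 * x)), (Htrig (INR n * x)).
  pose proof (Rabs_pos m). pose proof (Rabs_pos a).
  assert (Hre : Rabs (D_re x) <= 1 + Rabs m + Rabs a).
  { unfold D_re, Rminus. eapply Rle_trans; [apply Rabs_triang|].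
    eapply Rle_trans; [apply Rplus_le_compat_r, Rabs_triang|].
    rewrite !Rabs_Ropp, !Rabs_mult, Rabs_R1. nra. }
  assert (Him : Rabs (D_im x) <= Rabs m + Rabs a).
  { unfold D_im. rewrite Rabs_Ropp. eapply Rle_trans; [apply Rabs_triang|].
    rewrite !Rabs_mult. nra. }
  assert (Hnum : Rabs (cos (INR n * x) * D_re x + sin (INR n * x) * D_im x)
                 <= 1 + 2 * Rabs m + 2 * Rabs a).
  { eapply Rle_trans; [apply Rabs_triang|]. rewrite !Rabs_mult.
    pose proof (Rabs_pos (D_re x)). pose proof (Rabs_pos (D_im x)). nra. }
  pose proof (Hlow x). pose proof (D_norm2_pos x).
  unfold mode_D, Rdiv. rewrite Rabs_mult, Rabs_inv, (Rabs_pos_eq (D_norm2 x)) by lra.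
  apply Rmult_le_compat; [apply Rabs_pos | left; apply Rinv_0_lt_compat; lra | exact Hnum |].
  apply Rinv_le_contravar; lra.
Qed.

Lemma ex_RInt_mode_D (n : nat) (lo hi : R) : ex_RInt (mode_D n) lo hi.
Proof.
  apply (@ex_RInt_continuous R_CompleteNormedModule). intros x _. apply continuous_mode_D.
Qed.

Lemma RInt_mode_D (n : nat) :
  RInt (mode_D n) (- PI) PI = if Nat.eqb n 0 then 2 * PI else 0.
Proof.
  set (I n := RInt (mode_D n) (- PI) PI).
  assert (Hrec : forall n, I n - m * I (S n) - a * I (S (S n)) = if Nat.eqb n 0 then 2 * PI else 0).
  { intros k. rewrite <- RInt_cos_nat. unfold I.
    rewrite <- RInt_lincomb3_R by apply ex_RInt_mode_D.
    apply RInt_ext_R, mode_D_recurrence. }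
  destruct mode_D_bound as [L HL].
  assert (Hbound : forall n, Cmod (RtoC (I n)) <= 2 * PI * L).
  { intros k. rewrite Cmod_R. unfold I. pose proof PI_RGT_0.
    eapply Rle_trans; [apply abs_RInt_le_const; [lra | apply ex_RInt_mode_D | intros; apply HL]|].
    lra. }
  assert (Hvanish : forall n, (1 <= n)%nat -> I n = 0).
  { intros k Hk.
    assert (E : RtoC (I k) = 0%C).
    { apply (bounded_recurrence_solution_vanishes m a (fun n => RtoC (I n)) (2 * PI * L));
        auto.
      intros j Hj. rewrite <- !RtoC_mult, <- !RtoC_minus, Hrec.
      destruct j; [lia|reflexivity]. }
    injection E. auto. }
  destruct n as [|n]; [|apply Hvanish; lia].
  specialize (Hrec 0%nat). rewrite (Hvanish 1%nat), (Hvanish 2%nat) in Hrec by lia.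
  rewrite !Rmult_0_r, !Rminus_0_r in Hrec. exact Hrec.
Qed.

End CharacteristicPolynomial.

(** * Orthogonal polynomials and the spectral measure *)

(* [q_pair cb m k x = (q_k x, q_{k+1} x)]; the seed [q_0 = cb^2] (rather than [cb]) makes
   [q_poly_cos_sin] hold at [k = 0] as well. *)
Fixpoint q_pair (cb m : R) (k : nat) (x : R) : R * R :=
  match k with
  | O => (cb ^ 2, 2 * x - m)
  | S k => let p := q_pair cb m k x in (snd p, 2 * x * snd p - fst p)
  end.

Definition q_poly (cb m : R) (k : nat) (x : R) : R := fst (q_pair cb m k x).

(* Component [k] of the generalized eigenvector of [H] for the eigenvalue [2 B x], where
   [cb = Cc / B] and [m = mu / B]. *)
Definition eigvec (cb m : R) (k : nat) (x : R) : R :=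
  match k with O => cb | S _ => q_poly cb m k x end.

Definition sine_comb (m a t r : R) : R :=
  sin ((r + 1) * t) - m * sin (r * t) - a * sin ((r - 1) * t).

Lemma sine_comb_recurrence (m a t r : R) :
  sine_comb m a t (r + 1) = 2 * cos t * sine_comb m a t r - sine_comb m a t (r - 1).
Proof.
  unfold sine_comb.
  replace ((r + 1 + 1) * t) with (r * t + 2 * t) by ring.
  replace ((r + 1) * t) with (r * t + t) by ring.
  replace ((r + 1 - 1) * t) with (r * t) by ring.
  replace ((r - 1 + 1) * t) with (r * t) by ring.
  replace ((r - 1 - 1) * t) with (r * t - 2 * t) by ring.
  replace ((r - 1) * t) with (r * t - t) by ring.
  rewrite !sin_plus, !sin_minus, cos_2a_cos, sin_2a. ring.
Qed.

Lemma q_pair_cos_sin (cb m t : R) (k : nat) :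
  fst (q_pair cb m k (cos t)) * sin t = sine_comb m (cb ^ 2 - 1) t (INR k) /\
  snd (q_pair cb m k (cos t)) * sin t = sine_comb m (cb ^ 2 - 1) t (INR k + 1).
Proof.
  induction k as [|k [IH1 IH2]].
  - unfold sine_comb. simpl INR. cbn [q_pair fst snd].
    replace ((0 + 1 + 1) * t) with (2 * t) by ring.
    replace ((0 + 1 - 1) * t) with 0 by ring.
    replace ((0 - 1) * t) with (- t) by ring.
    replace ((0 + 1) * t) with t by ring.
    rewrite Rmult_0_l, sin_neg, sin_0, sin_2a. split; ring.
  - cbn [q_pair fst snd]. rewrite S_INR. split; [exact IH2|].
    rewrite sine_comb_recurrence. replace (INR k + 1 - 1) with (INR k) by ring.
    rewrite <- IH1, <- IH2. ring.
Qed.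

Lemma q_poly_cos_sin (cb m t : R) (k : nat) :
  q_poly cb m k (cos t) * sin t = sine_comb m (cb ^ 2 - 1) t (INR k).
Proof. apply q_pair_cos_sin. Qed.

Definition spectral_weight (m a t : R) : R := sin t ^ 2 / (PI * D_norm2 m a t).

Lemma is_C1_q_pair_cos (cb m : R) (k : nat) :
  is_C1 (fun t => fst (q_pair cb m k (cos t))) /\ is_C1 (fun t => snd (q_pair cb m k (cos t))).
Proof.
  induction k as [|k [IH1 IH2]]; cbn [q_pair fst snd].
  - split; [apply is_C1_const|].
    apply is_C1_minus; [apply is_C1_scal, is_C1_cos | apply is_C1_const].
  - split; [exact IH2|].
    apply is_C1_minus; [|exact IH1].
    apply (is_C1_ext (fun t => 2 * (cos t * snd (q_pair cb m k (cos t))))); [intros; ring|].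
    apply is_C1_scal, is_C1_mult; [apply is_C1_cos | exact IH2].
Qed.

Lemma is_C1_eigvec_cos (cb m : R) (k : nat) : is_C1 (fun t => eigvec cb m k (cos t)).
Proof.
  destruct k; [exact (is_C1_const cb)|].
  exact (proj1 (is_C1_q_pair_cos cb m (S k))).
Qed.

Lemma is_C1_D_norm2 (m a : R) : is_C1 (D_norm2 m a).
Proof.
  assert (Hcos2 : is_C1 (fun x => cos (2 * x)))
    by (apply (is_C1_comp (fun x => 2 * x) cos); [apply is_C1_scal, is_C1_id | apply is_C1_cos]).
  assert (Hsin2 : is_C1 (fun x => sin (2 * x)))
    by (apply (is_C1_comp (fun x => 2 * x) sin); [apply is_C1_scal, is_C1_id | apply is_C1_sin]).
  unfold D_norm2, D_re, D_im. apply is_C1_plus; apply is_C1_pow.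
  - apply is_C1_minus; [apply is_C1_minus|]; auto using is_C1_const, is_C1_scal, is_C1_cos.
  - apply (is_C1_ext (fun x => -1 * (m * sin x + a * sin (2 * x)))); [intros; ring|].
    apply is_C1_scal, is_C1_plus; auto using is_C1_scal, is_C1_sin.
Qed.

Section Weight.

Variables cb m : R.
Let a := cb ^ 2 - 1.
Hypothesis Hroots : roots_outside_disk m a.

Lemma is_C1_spectral_weight : is_C1 (spectral_weight m a).
Proof.
  apply is_C1_div; [apply is_C1_pow, is_C1_sin | apply is_C1_scal, is_C1_D_norm2|].
  intros t. pose proof PI_RGT_0. pose proof (D_norm2_pos m a Hroots t). nra.
Qed.

Lemma q_poly_weight_mode_D (k : nat) (t : R) :
  q_poly cb m k (cos t) * spectral_weight m a t
  = - (1 / (2 * PI)) * (mode_D m a (S (S k)) t - mode_D m a k t).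
Proof.
  pose proof PI_RGT_0. pose proof (D_norm2_pos m a Hroots t).
  unfold spectral_weight.
  replace (q_poly cb m k (cos t) * (sin t ^ 2 / (PI * D_norm2 m a t)))
    with (q_poly cb m k (cos t) * sin t * sin t / (PI * D_norm2 m a t))
    by (field; split; lra).
  rewrite q_poly_cos_sin. unfold mode_D, sine_comb. fold a.
  set (u := (INR k + 1) * t).
  replace (INR (S (S k)) * t) with (u + t) by (unfold u; rewrite !S_INR; ring).
  replace (INR k * t) with (u - t) by (unfold u; ring).
  replace ((INR k - 1) * t) with (u - 2 * t) by (unfold u; ring).
  rewrite cos_plus, sin_plus, cos_minus, !sin_minus.
  unfold D_norm2, D_re, D_im in *. field. split; lra.
Qed.

Lemma RInt_q_poly_weight (k : nat) :
  RInt (fun t => q_poly cb m k (cos t) * spectral_weight m a t) (- PI) PI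
  = if Nat.eqb k 0 then 1 else 0.
Proof.
  rewrite (RInt_ext_R _ (fun t => - (1 / (2 * PI)) * (mode_D m a (S (S k)) t - mode_D m a k t)))
    by apply q_poly_weight_mode_D.
  rewrite RInt_scal_R, RInt_minus_R, !RInt_mode_D by auto using ex_RInt_mode_D, ex_RInt_minus.
  pose proof PI_RGT_0. destruct k; simpl; field; lra.
Qed.

End Weight.

Definition kronecker (j l : nat) : R := if Nat.eqb j l then 1 else 0.

Section JacobiMatrix.

Variables mu B Cc : R.

Definition H_row (k : nat) (f : nat -> R) : R :=
  (match k with O => 0 | S k' => Hent mu B Cc k k' * f k' end)
  + Hent mu B Cc k k * f k + Hent mu B Cc k (S k) * f (S k).

Lemma Hpow_S (n k l : nat) : Hpow mu B Cc (S n) k l = H_row k (fun j => Hpow mu B Cc n j l).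
Proof. reflexivity. Qed.

Lemma Hent_diag (k : nat) : Hent mu B Cc k k = if Nat.eqb k 0 then mu else 0.
Proof. unfold Hent. rewrite Nat.eqb_refl. reflexivity. Qed.

Lemma Hent_super (k : nat) : Hent mu B Cc k (S k) = if Nat.eqb k 0 then Cc else B.
Proof.
  unfold Hent. destruct (Nat.eqb_spec k (S k)); [lia|].
  rewrite Nat.eqb_refl, Nat.min_l by lia. reflexivity.
Qed.

Lemma Hent_sym (k l : nat) : Hent mu B Cc k l = Hent mu B Cc l k.
Proof.
  unfold Hent. rewrite (Nat.eqb_sym k l).
  destruct (Nat.eqb_spec l k); [subst; reflexivity|].
  rewrite (Nat.eqb_sym (S k) l), (Nat.eqb_sym k (S l)), Bool.orb_comm, Nat.min_comm.
  reflexivity.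
Qed.

Lemma Hent_far (k l : nat) : k <> l -> S k <> l -> k <> S l -> Hent mu B Cc k l = 0.
Proof.
  intros H1 H2 H3. unfold Hent.
  rewrite (proj2 (Nat.eqb_neq _ _) H1), (proj2 (Nat.eqb_neq _ _) H2),
    (proj2 (Nat.eqb_neq _ _) H3).
  reflexivity.
Qed.

Lemma H_row_ext (k : nat) (f g : nat -> R) : (forall j, f j = g j) -> H_row k f = H_row k g.
Proof. intros E. unfold H_row. destruct k; rewrite !E; reflexivity. Qed.

Lemma H_row_kronecker (k l : nat) : H_row l (fun j => kronecker j k) = Hent mu B Cc l k.
Proof.
  unfold H_row, kronecker. destruct l as [|l].
  - destruct (Nat.eqb_spec 0 k), (Nat.eqb_spec 1 k); subst; try lia; try ring.
    rewrite (Hent_far 0 k) by lia. ring.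
  - destruct (Nat.eqb_spec l k), (Nat.eqb_spec (S l) k), (Nat.eqb_spec (S (S l)) k);
      subst; try lia; try ring.
    rewrite (Hent_far (S l) k) by lia. ring.
Qed.

(* Row [k+1] of [M] is determined by rows [k-1] and [k], as [H] has a nonzero superdiagonal. *)
Lemma symmetric_commuting_eq_kronecker (M : nat -> nat -> R) :
  (forall k, Hent mu B Cc k (S k) <> 0) ->
  (forall k l, M k l = M l k) ->
  (forall l, M 0%nat l = kronecker 0 l) ->
  (forall k l, H_row k (fun j => M j l) = H_row l (fun j => M j k)) ->
  forall k l, M k l = kronecker k l.
Proof.
  intros Hnz Hsym H0 HR.
  assert (Hrows : forall k j, (j <= k)%nat -> forall l, M j l = kronecker j l).
  { induction k as [|k IH]; intros j Hj l; [replace j with 0%nat by lia; apply H0|].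
    destruct (Nat.eq_dec j (S k)) as [->|Hne]; [|apply IH; lia].
    assert (E : H_row k (fun j => M j l) = H_row k (fun j => kronecker j l)).
    { rewrite HR, H_row_kronecker, (H_row_ext l _ (fun j => kronecker j k)), H_row_kronecker.
      - apply Hent_sym.
      - intros j. rewrite Hsym, IH by lia. unfold kronecker. rewrite Nat.eqb_sym. reflexivity. }
    unfold H_row in E. rewrite (IH k) in E by lia.
    apply (Rmult_eq_reg_l (Hent mu B Cc k (S k))); [|apply Hnz].
    destruct k as [|k']; [|rewrite (IH k') in E by lia]; lra. }
  intros k l. apply (Hrows k); lia.
Qed.

Lemma RInt_H_row (k : nat) (F : nat -> R -> R) (lo hi : R) :
  (forall j, ex_RInt (F j) lo hi) ->
  H_row k (fun j => RInt (F j) lo hi) = RInt (fun x => H_row k (fun j => F j x)) lo hi.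
Proof.
  intros Ex. unfold H_row. symmetry. destruct k as [|k].
  - rewrite (RInt_ext_R _ (fun x => Hent mu B Cc 0 0 * F 0%nat x + Hent mu B Cc 0 1 * F 1%nat x))
      by (intros; ring).
    rewrite RInt_plus_R, !RInt_scal_R; auto using ex_RInt_scal; ring.
  - rewrite !RInt_plus_R, !RInt_scal_R; auto using ex_RInt_scal, ex_RInt_plus.
Qed.

Lemma H_row_eigvec (k : nat) (x : R) : B <> 0 ->
  H_row k (fun j => eigvec (Cc / B) (mu / B) j x) = 2 * B * x * eigvec (Cc / B) (mu / B) k x.
Proof.
  intros HB. unfold H_row. rewrite Hent_diag, Hent_super.
  destruct k as [|[|k]]; [|rewrite Hent_sym, Hent_super..];
    unfold eigvec, q_poly; cbn [Nat.eqb q_pair fst snd].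
  - field. exact HB.
  - field. exact HB.
  - ring.
Qed.

End JacobiMatrix.

Lemma scaled_coupling_nonzero (cb m : R) : roots_outside_disk m (cb ^ 2 - 1) -> cb <> 0.
Proof.
  intros [[Ha _] | [Ha (x1 & x2 & _ & Hp & H1 & H2)]] E; subst cb.
  - simpl in Ha. lra.
  - replace (-1 / (0 ^ 2 - 1)) with 1 in Hp by (simpl; field).
    apply (f_equal Cmod) in Hp. rewrite Cmod_mult, Cmod_1 in Hp.
    pose proof (Cmod_ge_0 x1). nra.
Qed.

Section SpectralMeasure.

Variables mu B Cc : R.
Hypothesis HB : 0 < B.
Let cb := Cc / B.
Let m := mu / B.
Let a := cb ^ 2 - 1.
Hypothesis Hroots : roots_outside_disk m a.

Definition spectral_density (k l : nat) (t : R) : R :=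
  eigvec cb m k (cos t) * eigvec cb m l (cos t) * spectral_weight m a t.

Lemma is_C1_spectral_density (k l : nat) : is_C1 (spectral_density k l).
Proof.
  apply is_C1_mult; [apply is_C1_mult; apply is_C1_eigvec_cos|].
  apply is_C1_spectral_weight, Hroots.
Qed.

Lemma ex_RInt_moment_integrand (n k l : nat) :
  ex_RInt (fun t => (2 * B * cos t) ^ n * spectral_density k l t) (- PI) PI.
Proof.
  apply ex_RInt_C1, is_C1_mult; [|apply is_C1_spectral_density].
  apply is_C1_pow, is_C1_scal, is_C1_cos.
Qed.

Lemma H_row_moment_integrand (n k l : nat) (t : R) :
  H_row mu B Cc k (fun j => (2 * B * cos t) ^ n * spectral_density j l t)
  = (2 * B * cos t) ^ S n * spectral_density k l t.
Proof.
  unfold spectral_density.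
  transitivity ((2 * B * cos t) ^ n * H_row mu B Cc k (fun j => eigvec cb m j (cos t))
                * eigvec cb m l (cos t) * spectral_weight m a t);
    [unfold H_row; destruct k; ring|].
  unfold cb, m. rewrite H_row_eigvec by lra. simpl. ring.
Qed.

Lemma RInt_spectral_density (k l : nat) :
  RInt (spectral_density k l) (- PI) PI = kronecker k l.
Proof.
  apply (symmetric_commuting_eq_kronecker mu B Cc
           (fun k l => RInt (spectral_density k l) (- PI) PI)).
  - intros j. rewrite Hent_super. destruct (Nat.eqb j 0); [|lra].
    intros E. apply (scaled_coupling_nonzero cb m Hroots). unfold cb. rewrite E. field. lra.
  - intros j j'. apply RInt_ext_R. intros t. unfold spectral_density. ring.
  - intros j. destruct j as [|j].
    + rewrite (RInt_ext_R _ (fun t => q_poly cb m 0 (cos t) * spectral_weight m a t))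
        by (intros t; unfold spectral_density, eigvec, q_poly; simpl; ring).
      rewrite RInt_q_poly_weight by exact Hroots. reflexivity.
    + rewrite (RInt_ext_R _ (fun t => cb * (q_poly cb m (S j) (cos t) * spectral_weight m a t)))
        by (intros t; unfold spectral_density; simpl; ring).
      rewrite RInt_scal_R, (RInt_q_poly_weight cb m Hroots).
      * unfold kronecker. simpl. ring.
      * apply ex_RInt_C1, is_C1_mult; [exact (proj1 (is_C1_q_pair_cos cb m (S j)))|].
        apply is_C1_spectral_weight, Hroots.
  - intros j j'.
    assert (Hsym : forall k l, H_row mu B Cc k (fun i => RInt (spectral_density i l) (- PI) PI)
                   = RInt (fun t => 2 * B * cos t * spectral_density k l t) (- PI) PI).
    { intros k' l'. rewrite (H_row_ext _ _ _ _ _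
          (fun i => RInt (fun t => (2 * B * cos t) ^ 0 * spectral_density i l' t) (- PI) PI))
        by (intros i; apply RInt_ext_R; intros; simpl; ring).
      rewrite RInt_H_row by (intros; apply ex_RInt_moment_integrand).
      apply RInt_ext_R. intros t. rewrite H_row_moment_integrand. simpl. ring. }
    rewrite !Hsym. apply RInt_ext_R. intros t. unfold spectral_density. ring.
Qed.

Lemma Hpow_moment (n k l : nat) :
  Hpow mu B Cc n k l = RInt (fun t => (2 * B * cos t) ^ n * spectral_density k l t) (- PI) PI.
Proof.
  revert k. induction n as [|n IH]; intros k.
  - rewrite (RInt_ext_R _ (spectral_density k l)) by (intros; simpl; ring).
    rewrite RInt_spectral_density. reflexivity.
  - rewrite Hpow_S, (H_row_ext _ _ _ _ _ _ IH), RInt_H_row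
      by (intros; apply ex_RInt_moment_integrand).
    apply RInt_ext_R. intros t. apply H_row_moment_integrand.
Qed.

End SpectralMeasure.

(** * The exponential series *)

Definition rot (p : R * R) : R * R := (snd p, - fst p).

Lemma iter_rot_S (p : R * R) (n : nat) :
  Nat.iter (S n) rot p = (snd (Nat.iter n rot p), - fst (Nat.iter n rot p)).
Proof. reflexivity. Qed.

Definition harmonic (p : R * R) (x : R) : R := fst p * cos x + snd p * sin x.

Definition l1_norm (p : R * R) : R := Rabs (fst p) + Rabs (snd p).

Lemma is_derive_harmonic (p : R * R) (x : R) : is_derive (harmonic p) x (harmonic (rot p) x).
Proof. unfold harmonic, rot. simpl. auto_derive; [exact I|]. ring. Qed.

Lemma Derive_n_harmonic (p : R * R) (k : nat) (x : R) :
  Derive_n (harmonic p) k x = harmonic (Nat.iter k rot p) x.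
Proof.
  revert x. induction k as [|k IH]; intros x; [reflexivity|].
  simpl. rewrite (Derive_ext _ _ _ IH). apply is_derive_unique, is_derive_harmonic.
Qed.

Lemma ex_derive_n_harmonic (p : R * R) (k : nat) (x : R) : ex_derive_n (harmonic p) k x.
Proof.
  destruct k as [|k]; [exact I|]. simpl.
  apply (ex_derive_ext (harmonic (Nat.iter k rot p))).
  - intros y. symmetry. apply Derive_n_harmonic.
  - eexists. apply is_derive_harmonic.
Qed.

Lemma l1_norm_iter_rot (p : R * R) (n : nat) : l1_norm (Nat.iter n rot p) = l1_norm p.
Proof.
  induction n as [|n IH]; [reflexivity|].
  rewrite <- IH. unfold l1_norm. simpl. rewrite Rabs_Ropp. ring.
Qed.

Lemma Rabs_harmonic_le (p : R * R) (x : R) : Rabs (harmonic p x) <= l1_norm p.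
Proof.
  unfold harmonic, l1_norm. eapply Rle_trans; [apply Rabs_triang|]. rewrite !Rabs_mult.
  assert (Rabs (cos x) <= 1) by (apply Rabs_le, COS_bound).
  assert (Rabs (sin x) <= 1) by (apply Rabs_le, SIN_bound).
  pose proof (Rabs_pos (fst p)). pose proof (Rabs_pos (snd p)). nra.
Qed.

Definition taylor_harmonic (p : R * R) (N : nat) (y : R) : R :=
  sum_f_R0 (fun n => y ^ n / INR (fact n) * fst (Nat.iter n rot p)) N.

Lemma taylor_harmonic_error_pos (p : R * R) (N : nat) (y : R) : 0 < y ->
  Rabs (harmonic p y - taylor_harmonic p N y) <= y ^ S N / INR (fact (S N)) * l1_norm p.
Proof.
  intros Hy.
  destruct (Taylor_Lagrange (harmonic p) N 0 y Hy) as (z & _ & E);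
    [intros; apply ex_derive_n_harmonic|].
  assert (Hcoef : 0 <= y ^ S N / INR (fact (S N)))
    by (apply Rdiv_le_0_compat; [apply pow_le; lra | apply lt_0_INR, lt_O_fact]).
  rewrite E. unfold taylor_harmonic. rewrite Rminus_0_r.
  rewrite (sum_eq _ (fun n => y ^ n / INR (fact n) * fst (Nat.iter n rot p))).
  2:{ intros i _. rewrite Derive_n_harmonic. unfold harmonic. rewrite cos_0, sin_0. ring. }
  match goal with |- Rabs (?A + ?B - ?A) <= _ => replace (A + B - A) with B by ring end.
  rewrite Rabs_mult, Rabs_pos_eq by exact Hcoef. apply Rmult_le_compat_l; [exact Hcoef|].
  rewrite Derive_n_harmonic, <- (l1_norm_iter_rot p (S N)). apply Rabs_harmonic_le.
Qed.

Definition conj_pair (p : R * R) : R * R := (fst p, - snd p).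

Lemma iter_rot_conj_pair (p : R * R) (n : nat) :
  fst (Nat.iter n rot (conj_pair p)) = (-1) ^ n * fst (Nat.iter n rot p) /\
  snd (Nat.iter n rot (conj_pair p)) = - ((-1) ^ n * snd (Nat.iter n rot p)).
Proof.
  induction n as [|n [IH1 IH2]]; [unfold conj_pair; simpl; split; ring|].
  rewrite !iter_rot_S. cbn [fst snd]. rewrite IH1, IH2, <- tech_pow_Rmult. split; ring.
Qed.

Lemma taylor_harmonic_error (p : R * R) (N : nat) (y : R) :
  Rabs (harmonic p y - taylor_harmonic p N y) <= Rabs y ^ S N / INR (fact (S N)) * l1_norm p.
Proof.
  destruct (Rtotal_order y 0) as [Hy|[Hy|Hy]].
  - pose proof (taylor_harmonic_error_pos (conj_pair p) N (- y) ltac:(lra)) as H.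
    replace (harmonic (conj_pair p) (- y)) with (harmonic p y) in H
      by (unfold harmonic, conj_pair; simpl; rewrite cos_neg, sin_neg; ring).
    replace (taylor_harmonic (conj_pair p) N (- y)) with (taylor_harmonic p N y) in H.
    2:{ unfold taylor_harmonic. apply sum_eq. intros i _.
        rewrite (proj1 (iter_rot_conj_pair p i)).
        replace (- y) with (-1 * y) by ring. rewrite Rpow_mult_distr.
        assert (Hsq : (-1) ^ i * (-1) ^ i = 1)
          by (rewrite <- Rpow_mult_distr; replace (-1 * -1) with 1 by ring; apply pow1).
        transitivity ((-1) ^ i * (-1) ^ i * (y ^ i / INR (fact i) * fst (Nat.iter i rot p)));
          [rewrite Hsq | unfold Rdiv]; ring. }
    rewrite (Rabs_left y) by lra. unfold l1_norm, conj_pair in *. simpl in H.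
    rewrite Rabs_Ropp in H. exact H.
  - subst y. unfold taylor_harmonic.
    replace (sum_f_R0 (fun n => 0 ^ n / INR (fact n) * fst (Nat.iter n rot p)) N) with (fst p).
    2:{ induction N as [|N IH]; [simpl; field|].
        rewrite tech5, <- IH. simpl. unfold Rdiv. ring. }
    unfold harmonic. rewrite cos_0, sin_0, Rabs_R0, pow_ne_zero by lia.
    replace (fst p * 1 + snd p * 0 - fst p) with 0 by ring. rewrite Rabs_R0.
    unfold Rdiv. rewrite Rmult_0_l, Rmult_0_l. lra.
  - rewrite (Rabs_pos_eq y) by lra. apply taylor_harmonic_error_pos, Hy.
Qed.

Lemma is_lim_seq_pow_div_fact (r : R) : is_lim_seq (fun N => r ^ S N / INR (fact (S N))) 0.
Proof.
  assert (Ex : ex_series (fun k => scal (pow_n r k) (/ INR (fact k))))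
    by (eexists; apply is_exp_Reals).
  apply ex_series_lim_0, (is_lim_seq_incr_1 _ 0) in Ex.
  eapply is_lim_seq_ext; [|exact Ex]. intros n. simpl. rewrite pow_n_pow. reflexivity.
Qed.

Lemma is_lim_seq_error_bound (v e : nat -> R) (l : R) :
  (forall n, Rabs (v n - l) <= e n) -> is_lim_seq e 0 -> is_lim_seq v l.
Proof.
  intros Hb He. apply is_lim_seq_spec. intros eps.
  apply is_lim_seq_spec in He. destruct (He eps) as [N HN]. exists N. intros n Hn.
  specialize (HN n Hn). rewrite Rminus_0_r in HN.
  eapply Rle_lt_trans; [apply Hb|]. eapply Rle_lt_trans; [apply Rle_abs|exact HN].
Qed.

Lemma is_C1_taylor_harmonic (p : R * R) (N : nat) : is_C1 (taylor_harmonic p N).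
Proof.
  unfold taylor_harmonic. induction N as [|N IH].
  - apply (is_C1_ext (fun _ => fst p)); [intros; simpl; field | apply is_C1_const].
  - apply (is_C1_ext (fun y => sum_f_R0 (fun n => y ^ n / INR (fact n) * fst (Nat.iter n rot p)) N
                      + / INR (fact (S N)) * fst (Nat.iter (S N) rot p) * y ^ S N));
      [intros; rewrite tech5; unfold Rdiv; ring|].
    apply is_C1_plus; [exact IH|]. apply is_C1_scal, is_C1_pow, is_C1_id.
Qed.

Lemma is_C1_harmonic (p : R * R) : is_C1 (harmonic p).
Proof. apply is_C1_plus; apply is_C1_scal; [apply is_C1_cos | apply is_C1_sin]. Qed.

Lemma is_C1_comp_scaled_cos (g : R -> R) (u : R) : is_C1 g -> is_C1 (fun t => g (u * cos t)).
Proof.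
  intros Hg. apply (is_C1_comp (fun t => u * cos t) g); [apply is_C1_scal, is_C1_cos | exact Hg].
Qed.

Section Amplitude.

Variables mu B Cc : R.
Variable j : nat.
Hypothesis HB : 0 < B.
Hypothesis Hroots : roots_outside_disk (mu / B) ((Cc / B) ^ 2 - 1).

Let G := spectral_density mu B Cc j j.

Lemma spectral_density_diag_nonneg (t : R) : 0 <= G t.
Proof.
  unfold G, spectral_density, spectral_weight. apply Rmult_le_pos; [apply Rle_0_sqr|].
  apply Rdiv_le_0_compat; [apply pow2_ge_0|].
  pose proof PI_RGT_0. pose proof (D_norm2_pos _ _ Hroots t). nra.
Qed.

Lemma continuous_spectral_density_diag (t : R) : continuous G t.
Proof. apply is_C1_continuous, is_C1_spectral_density, Hroots. Qed.

Lemma is_C1_mult_density (f : R -> R) : is_C1 f -> is_C1 (fun th => f th * G th).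
Proof. intros Hf. apply is_C1_mult; [exact Hf | apply is_C1_spectral_density, Hroots]. Qed.

Lemma RInt_abs_spectral_density_diag : RInt (fun t => Rabs (G t)) (- PI) PI = 1.
Proof.
  rewrite (RInt_ext_R _ G) by (intros t; apply Rabs_pos_eq, spectral_density_diag_nonneg).
  unfold G. rewrite RInt_spectral_density by assumption.
  unfold kronecker. rewrite Nat.eqb_refl. reflexivity.
Qed.

Lemma partial_sum_as_integral (p : R * R) (t : R) (N : nat) :
  sum_f_R0 (fun n => fst (Nat.iter n rot p) * t ^ n / INR (fact n) * Hpow mu B Cc n j j) N
  = RInt (fun th => taylor_harmonic p N (2 * B * t * cos th) * G th) (- PI) PI.
Proof.
  induction N as [|N IH].
  - cbn [sum_f_R0]. rewrite Hpow_moment by assumption.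
    rewrite <- RInt_scal_R by apply ex_RInt_moment_integrand, Hroots.
    apply RInt_ext_R. intros th. unfold taylor_harmonic. simpl. unfold G. field.
  - rewrite tech5, IH, Hpow_moment by assumption. fold G.
    rewrite <- RInt_scal_R, <- RInt_plus_R.
    + apply RInt_ext_R. intros th. unfold taylor_harmonic. rewrite tech5, !Rpow_mult_distr.
      field. apply INR_fact_neq_0.
    + apply ex_RInt_C1, is_C1_mult_density, is_C1_comp_scaled_cos, is_C1_taylor_harmonic.
    + apply ex_RInt_C1, is_C1_scal, is_C1_mult_density, is_C1_pow, is_C1_scal, is_C1_cos.
    + apply ex_RInt_moment_integrand, Hroots.
Qed.

Lemma is_series_harmonic_moments (p : R * R) (t : R) : l1_norm p <= 1 ->
  is_series (fun n => fst (Nat.iter n rot p) * t ^ n / INR (fact n) * Hpow mu B Cc n j j)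
    (RInt (fun th => harmonic p (2 * B * t * cos th) * G th) (- PI) PI).
Proof.
  intros Hp. set (u := 2 * B * t).
  change (is_lim_seq (sum_n (fun n => fst (Nat.iter n rot p) * t ^ n / INR (fact n)
                                       * Hpow mu B Cc n j j))
            (RInt (fun th => harmonic p (u * cos th) * G th) (- PI) PI)).
  apply (is_lim_seq_ext
           (fun N => RInt (fun th => taylor_harmonic p N (u * cos th) * G th) (- PI) PI)).
  { intros N. rewrite sum_n_Reals, partial_sum_as_integral. reflexivity. }
  apply (is_lim_seq_error_bound _ (fun N => Rabs u ^ S N / INR (fact (S N))));
    [|apply is_lim_seq_pow_div_fact].
  intros N. rewrite <- RInt_minus_R.
  2, 3: apply ex_RInt_C1, is_C1_mult_density, is_C1_comp_scaled_cos;
        auto using is_C1_taylor_harmonic, is_C1_harmonic.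
  rewrite (RInt_ext_R _
    (fun th => (taylor_harmonic p N (u * cos th) - harmonic p (u * cos th)) * G th))
    by (intros; ring).
  rewrite <- (Rmult_1_r (Rabs u ^ S N / INR (fact (S N)))), <- RInt_abs_spectral_density_diag.
  apply abs_RInt_mult_le; [pose proof PI_RGT_0; lra | | exact continuous_spectral_density_diag |].
  - intros th. apply is_C1_continuous, is_C1_minus;
      apply is_C1_comp_scaled_cos; auto using is_C1_taylor_harmonic, is_C1_harmonic.
  - intros th. rewrite <- Rabs_Ropp, Ropp_minus_distr.
    eapply Rle_trans; [apply taylor_harmonic_error|].
    rewrite <- (Rmult_1_r (Rabs u ^ S N / INR (fact (S N)))).
    assert (Hcoef : 0 <= / INR (fact (S N))) by (left; apply Rinv_0_lt_compat, INR_fact_lt_0).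
    assert (Hp0 : 0 <= l1_norm p)
      by (unfold l1_norm; pose proof (Rabs_pos (fst p)); pose proof (Rabs_pos (snd p)); lra).
    unfold Rdiv. apply Rmult_le_compat; [| exact Hp0 | | exact Hp].
    + apply Rmult_le_pos; [apply pow_le, Rabs_pos | exact Hcoef].
    + apply Rmult_le_compat_r; [exact Hcoef|]. apply pow_incr. split; [apply Rabs_pos|].
      rewrite Rabs_mult. pose proof (Rabs_pos u).
      assert (Rabs (cos th) <= 1) by (apply Rabs_le, COS_bound). nra.
Qed.

End Amplitude.

Lemma Cpow_minus_i (t : R) (n : nat) :
  Cpow (Cmult (Copp Ci) (RtoC t)) n
  = (fst (Nat.iter n rot (1, 0)) * t ^ n, snd (Nat.iter n rot (1, 0)) * t ^ n).
Proof.
  induction n as [|n IH]; [apply injective_projections; simpl; ring|].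
  simpl Cpow. rewrite IH, iter_rot_S. apply injective_projections; simpl; ring.
Qed.

Lemma Re_Im_expTerm (mu B Cc t : R) (k l n : nat) :
  Re (expTerm mu B Cc t k l n)
    = fst (Nat.iter n rot (1, 0)) * t ^ n / INR (fact n) * Hpow mu B Cc n k l /\
  Im (expTerm mu B Cc t k l n)
    = fst (Nat.iter n rot (0, -1)) * t ^ n / INR (fact n) * Hpow mu B Cc n k l.
Proof.
  replace (0, -1) with (rot (1, 0)) by (unfold rot; simpl; f_equal; ring).
  rewrite <- Nat.iter_succ_r, iter_rot_S. cbn [fst].
  unfold expTerm. rewrite Cpow_minus_i. pose proof (INR_fact_neq_0 n).
  split; unfold Re, Im, Cdiv; simpl; field; auto.
Qed.

Lemma amp_spectral_representation (mu B Cc t : R) (j : nat) : 0 < B ->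
  roots_outside_disk (mu / B) ((Cc / B) ^ 2 - 1) ->
  amp mu B Cc t j j =
  (RInt (fun th => cos (2 * B * t * cos th) * spectral_density mu B Cc j j th) (- PI) PI,
   RInt (fun th => - sin (2 * B * t * cos th) * spectral_density mu B Cc j j th) (- PI) PI).
Proof.
  intros HB Hroots. unfold amp. apply injective_projections; cbn [fst snd].
  - rewrite (Series_ext _ _ (fun n => proj1 (Re_Im_expTerm mu B Cc t j j n))).
    erewrite is_series_unique; [|apply is_series_harmonic_moments; auto;
                                 unfold l1_norm; simpl; rewrite Rabs_R1, Rabs_R0; lra].
    apply RInt_ext_R. intros th. unfold harmonic. simpl. ring.
  - rewrite (Series_ext _ _ (fun n => proj2 (Re_Im_expTerm mu B Cc t j j n))).
    erewrite is_series_unique; [|apply is_series_harmonic_moments; auto;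
                                 unfold l1_norm; simpl; rewrite Rabs_R0, Rabs_left; lra].
    apply RInt_ext_R. intros th. unfold harmonic. simpl. ring.
Qed.

(** * Decay of the amplitude *)

Section IntegrationByParts.

Variables g g' h h' : R -> R.
Variable u : R.
Hypothesis Hu : u <> 0.
Hypothesis Hg : has_cont_derive g g'.
Hypothesis Hh : has_cont_derive h h'.
Hypothesis Hh_end : h (- PI) = 0 /\ h PI = 0.

Let continuous_comp_scaled_cos (f : R -> R) (x : R) :
  (forall y, continuous f y) -> continuous (fun t => f (u * cos t)) x.
Proof.
  intros Hf. apply (continuous_comp (fun t => u * cos t) f); [|apply Hf].
  apply is_C1_continuous, is_C1_scal, is_C1_cos.
Qed.

Let continuous_g (y : R) : continuous g y.
Proof. apply is_C1_continuous. exists g'. exact Hg. Qed.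

Let continuous_h (y : R) : continuous h y.
Proof. apply is_C1_continuous. exists h'. exact Hh. Qed.

(* Integrate the derivative of [t |-> g (u cos t) h t]; the boundary terms vanish. *)
Lemma RInt_by_parts_cos :
  RInt (fun t => g' (u * cos t) * (sin t * h t)) (- PI) PI
  = / u * RInt (fun t => g (u * cos t) * h' t) (- PI) PI.
Proof.
  set (I1 := RInt (fun t => g' (u * cos t) * (sin t * h t)) (- PI) PI).
  set (I2 := RInt (fun t => g (u * cos t) * h' t) (- PI) PI).
  assert (Hc1 : forall x, continuous (fun t => g' (u * cos t) * (sin t * h t)) x).
  { intros x. apply continuous_mult_R; [apply continuous_comp_scaled_cos; apply Hg|].
    apply continuous_mult_R; [apply continuous_sin | apply continuous_h]. }
  assert (Hc2 : forall x, continuous (fun t => g (u * cos t) * h' t) x).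
  { intros x.
    apply continuous_mult_R; [apply continuous_comp_scaled_cos, continuous_g | apply Hh]. }
  assert (Hex : forall f, (forall x, continuous f x) -> ex_RInt f (- PI) PI)
    by (intros f Hf; apply (@ex_RInt_continuous R_CompleteNormedModule); auto).
  assert (Hzero : -u * I1 + I2 = 0).
  { unfold I1, I2. rewrite <- RInt_scal_R, <- RInt_plus_R
      by (apply Hex; intros; first [apply Hc1 | apply Hc2 | apply continuous_mult_R;
                                    [apply continuous_const | apply Hc1]]).
    apply is_RInt_unique.
    replace 0 with (minus (g (u * cos PI) * h PI) (g (u * cos (- PI)) * h (- PI)))
      by (destruct Hh_end as [-> ->]; unfold minus, plus, opp; simpl; ring).
    apply (is_RInt_derive (fun t => g (u * cos t) * h t)).
    - intros x _. destruct (Hg (u * cos x)) as [Dg _]. destruct (Hh x) as [Dh _].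
      assert (Dgc : is_derive (fun t => g (u * cos t)) x (g' (u * cos x) * (u * - sin x))).
      { replace (g' (u * cos x) * (u * - sin x)) with (scal (u * - sin x) (g' (u * cos x)))
          by (unfold scal; simpl; unfold mult; simpl; ring).
        apply (is_derive_comp g (fun t => u * cos t)); [exact Dg|].
        apply (is_derive_scal (fun t => cos t)), is_derive_cos. }
      replace (- u * (g' (u * cos x) * (sin x * h x)) + g (u * cos x) * h' x)
        with (g' (u * cos x) * (u * - sin x) * h x + g (u * cos x) * h' x) by ring.
      apply (is_derive_mult (fun t => g (u * cos t)) h); [exact Dgc | exact Dh |].
      intros; apply Rmult_comm.
    - intros x _. apply continuous_plus_R; [|apply Hc2].
      apply continuous_mult_R; [apply continuous_const | apply Hc1]. }
  apply (Rmult_eq_reg_l u); [|exact Hu].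
  rewrite <- Rmult_assoc, Rinv_r, Rmult_1_l by exact Hu. lra.
Qed.

Lemma RInt_by_parts_cos_bound : (forall y, Rabs (g y) <= 1) ->
  Rabs (RInt (fun t => g' (u * cos t) * (sin t * h t)) (- PI) PI)
  <= / Rabs u * RInt (fun t => Rabs (h' t)) (- PI) PI.
Proof.
  intros Hb. rewrite RInt_by_parts_cos, Rabs_mult, Rabs_inv.
  apply Rmult_le_compat_l; [left; apply Rinv_0_lt_compat, Rabs_pos_lt, Hu|].
  rewrite <- (Rmult_1_l (RInt (fun t => Rabs (h' t)) (- PI) PI)).
  apply abs_RInt_mult_le; [pose proof PI_RGT_0; lra | | apply Hh | intros; apply Hb].
  intros x. apply continuous_comp_scaled_cos, continuous_g.
Qed.

End IntegrationByParts.

Lemma is_lim_of_inv_sq_bound (f : R -> R) (c : R) :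
  (forall t, 0 < t -> Rabs (f t) <= c / t ^ 2) -> is_lim f p_infty 0.
Proof.
  intros Hf. apply is_lim_spec. intros eps. simpl.
  assert (Hc : 0 <= c).
  { specialize (Hf 1 Rlt_0_1). pose proof (Rabs_pos (f 1)). simpl in Hf. lra. }
  pose proof (cond_pos eps) as Heps.
  exists (Rmax 1 (c / eps)). intros t Ht.
  assert (H1 : 1 < t) by (eapply Rle_lt_trans; [apply Rmax_l | exact Ht]).
  assert (H2 : c / eps < t) by (eapply Rle_lt_trans; [apply Rmax_r | exact Ht]).
  rewrite Rminus_0_r. eapply Rle_lt_trans; [apply Hf; lra|].
  apply Rmult_lt_reg_r with (t ^ 2); [nra|].
  unfold Rdiv in *. rewrite Rmult_assoc, Rinv_l, Rmult_1_r by (apply pow_nonzero; lra).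
  apply (Rmult_lt_compat_r eps) in H2; [|exact Heps].
  rewrite Rmult_assoc, Rinv_l, Rmult_1_r in H2 by lra. nra.
Qed.

Section Decay.

Variables mu B Cc : R.
Variable j : nat.
Hypothesis HB : 0 < B.
Hypothesis Hroots : roots_outside_disk (mu / B) ((Cc / B) ^ 2 - 1).

(* The factor [sin] split off here is the one produced by differentiating [g (u cos t)], so
   one integration by parts applies; without it the stationary points [0, PI] of [cos] would
   only give decay like [1 / sqrt t]. *)
Definition reduced_density (t : R) : R :=
  eigvec (Cc / B) (mu / B) j (cos t) ^ 2 * sin t
  / (PI * D_norm2 (mu / B) ((Cc / B) ^ 2 - 1) t).

Lemma spectral_density_eq_sin_mul (t : R) :
  spectral_density mu B Cc j j t = sin t * reduced_density t.
Proof.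
  unfold spectral_density, reduced_density, spectral_weight.
  pose proof PI_RGT_0. pose proof (D_norm2_pos _ _ Hroots t). field. nra.
Qed.

Lemma is_C1_reduced_density : is_C1 reduced_density.
Proof.
  apply is_C1_div.
  - apply is_C1_mult; [apply is_C1_pow, is_C1_eigvec_cos | apply is_C1_sin].
  - apply is_C1_scal, is_C1_D_norm2.
  - intros t. pose proof PI_RGT_0. pose proof (D_norm2_pos _ _ Hroots t). nra.
Qed.

Lemma reduced_density_at_PI : reduced_density (- PI) = 0 /\ reduced_density PI = 0.
Proof. unfold reduced_density. rewrite sin_neg, sin_PI. split; unfold Rdiv; ring. Qed.

Lemma amp_decay_bound : exists K, forall t, 0 < t ->
  Cmod (amp mu B Cc t j j) ^ 2 <= 2 * K ^ 2 / t ^ 2.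
Proof.
  destruct is_C1_reduced_density as [h' Hh'].
  set (K := / (2 * B) * RInt (fun x => Rabs (h' x)) (- PI) PI).
  exists K. intros t Ht.
  assert (Hpart : forall g g', has_cont_derive g g' -> (forall y, Rabs (g y) <= 1) ->
    Rabs (RInt (fun x => g' (2 * B * t * cos x) * spectral_density mu B Cc j j x) (- PI) PI)
    <= K / t).
  { intros g g' Hg Hbound.
    rewrite (RInt_ext_R _ (fun x => g' (2 * B * t * cos x) * (sin x * reduced_density x)))
      by (intros; rewrite spectral_density_eq_sin_mul; reflexivity).
    eapply Rle_trans.
    - apply (RInt_by_parts_cos_bound g g' reduced_density h' (2 * B * t));
        [nra | exact Hg | exact Hh' | exact reduced_density_at_PI | exact Hbound].
    - rewrite Rabs_pos_eq by nra. apply Req_le. unfold K. field. lra. }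
  assert (Hsin : has_cont_derive sin cos).
  { intros y. split; [apply is_derive_sin | apply continuous_cos]. }
  assert (Hcos : has_cont_derive cos (fun y => - sin y)).
  { intros y. split; [apply is_derive_cos | apply (continuous_opp sin), continuous_sin]. }
  pose proof (Hpart sin cos Hsin (fun y => Rabs_le _ _ (SIN_bound y))) as Hre.
  pose proof (Hpart cos (fun y => - sin y) Hcos (fun y => Rabs_le _ _ (COS_bound y))) as Him.
  rewrite amp_spectral_representation by assumption.
  rewrite Cmod2_alt. unfold Re, Im. cbn [fst snd].
  rewrite <- (pow2_abs (RInt _ _ _)), <- (pow2_abs (RInt (fun th => - sin _ * _) _ _)).
  assert (HKt : 0 <= K / t) by (eapply Rle_trans; [apply Rabs_pos | exact Hre]).
  replace (2 * K ^ 2 / t ^ 2) with ((K / t) ^ 2 + (K / t) ^ 2) by (field; lra).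
  apply Rplus_le_compat; apply pow_incr; split; auto using Rabs_pos.
Qed.

End Decay.

Theorem theorem1 (B Cc mu : R) (j : nat) :
  0 < B ->
  decay_condition mu B Cc ->
  is_lim (fun t => (Cmod (amp mu B Cc t j j)) ^ 2) p_infty 0.
Proof.
  intros HB Hdecay.
  pose proof (decay_condition_roots_outside_disk B Cc mu HB Hdecay) as Hroots.
  destruct (amp_decay_bound mu B Cc j HB Hroots) as [K HK].
  apply (is_lim_of_inv_sq_bound _ (2 * K ^ 2)).
  intros t Ht. rewrite Rabs_pos_eq by apply pow2_ge_0. apply HK, Ht.
Qed.
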